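(* Let $F:\mathbb{R}^k_+\to\mathbb{R}^k_+$ satisfy $\sup_{x\in\mathbb{R}^k_+}\|F(x)\|<\infty$. Let $M_0\in\{\{0\},\ \partial\mathbb{R}^k_+\}$ be absorbing for the nonlinear Poisson process $\{X^\varepsilon_t\}$ associated with $F$. Assume $F_i(x)>0$ for all $i$ and all $x\in\mathbb{R}^k_+\setminus M_0$. Then, for each $\varepsilon>0$, the process has at least one quasi-stationary distribution supported on $\varepsilon\mathbb{Z}^k_+\setminus M_0$. That is, there is a probability measure $\mu_\varepsilon$ on $\varepsilon\mathbb{Z}^k_+\setminus M_0$ and $\lambda_\varepsilon\in(0,1)$ with $\sum_{x}\mu_\varepsilon(x)p^\varepsilon(x,\Gamma)=\lambda_\varepsilon\mu_\varepsilon(\Gamma)$ for all $\Gamma\subset\varepsilon\mathbb{Z}^k_+\setminus M_0$.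
   Context: Let $\mathbb{R}^k_+=\{x\in\mathbb{R}^k:x_i\ge0\}$ and $\partial\mathbb{R}^k_+=\{x\in\mathbb{R}^k_+:\prod_ix_i=0\}$. For $y\in\mathbb{R}^k_+$, let $Z_1(y),Z_2(y),\dots$ be i.i.d. random vectors with independent components, the $i$-th component being Poisson distributed with mean $y_i$. Given $\varepsilon>0$ and $X^\varepsilon_0\in\varepsilon\mathbb{Z}^k_+$, the nonlinear Poisson process associated with $F$ is the Markov chain on $\varepsilon\mathbb{Z}^k_+$ defined by $X^\varepsilon_{t+1}=\varepsilon Z_{t+1}(F(X^\varepsilon_t)/\varepsilon)$ (independent Poisson draws at each step). Its transition kernel is $p^\varepsilon$. A set $M_0$ is absorbing if $p^\varepsilon(x,M_0)=1$ for $x\in M_0$. *)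

From Stdlib Require Import Reals.
From mathcomp Require Import all_boot.
Set Implicit Arguments. Unset Strict Implicit. Unset Printing Implicit Defensive.

Open Scope R_scope.

Definition vecR (k : nat) := 'I_k -> R.

Definition nonnegv (k : nat) (x : vecR k) : Prop := forall i, 0 <= x i.

Definition origin_set (k : nat) (x : vecR k) : Prop := forall i, x i = 0.
Definition boundary_set (k : nat) (x : vecR k) : Prop :=
  nonnegv x /\ \big[Rmult/1]_(i < k) x i = 0.

(* lattice index n in Z^k_+ ; the actual point is eps * n in eps Z^k_+ *)
Definition lat (k : nat) := {ffun 'I_k -> nat}.
Definition pos (k : nat) (eps : R) (n : lat k) : vecR k := fun i => eps * INR (n i).

Definition poisson_pmf (lam : R) (j : nat) : R := exp (- lam) * lam ^ j / INR (j`!).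

(* transition kernel p^eps(eps n, eps m) of the nonlinear Poisson process:
   X_{t+1} = eps * Z(F(X_t)/eps), independent Poisson components *)
Definition kernel (k : nat) (F : vecR k -> vecR k) (eps : R) (n m : lat k) : R :=
  \big[Rmult/1]_(i < k) poisson_pmf (F (pos eps n) i / eps) (m i).

(* has_sum P f s : the (unordered) sum of the nonnegative family f over the
   points satisfying P equals s, i.e. s is the supremum of finite partial sums. *)
Definition has_sum (T : eqType) (P : T -> Prop) (f : T -> R) (s : R) : Prop :=
  is_lub (fun r => exists l : seq T, uniq l /\ (forall y, y \in l -> P y) /\
                     r = \big[Rplus/0]_(y <- l) f y) s.

Definition absorbing (k : nat) (F : vecR k -> vecR k) (eps : R) (M0 : vecR k -> Prop) : Prop :=
  forall n : lat k, M0 (pos eps n) ->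
    has_sum (fun m => M0 (pos eps m)) (kernel F eps n) 1.

Definition is_QSD (k : nat) (F : vecR k -> vecR k) (eps : R) (M0 : vecR k -> Prop)
    (mu : lat k -> R) (lam : R) : Prop :=
  (forall n, 0 <= mu n) /\
  (forall n, M0 (pos eps n) -> mu n = 0) /\
  has_sum (fun _ => True) mu 1 /\
  0 < lam < 1 /\
  (forall Gamma : lat k -> Prop, (forall n, Gamma n -> ~ M0 (pos eps n)) ->
     exists (q : lat k -> R) (a b : R),
       (forall n, has_sum Gamma (kernel F eps n) (q n)) /\
       has_sum (fun _ => True) (fun n => mu n * q n) a /\
       has_sum Gamma mu b /\
       a = lam * b).

(* On a finite set [S] of points outside [M0] the kernel is strictly positive, so the
   probabilities of surviving [n] steps in [S] are comparable from any starting point and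
   almost multiplicative in [n]; by Fekete's lemma they grow like [rho ^ n], and the time
   average of [x0 Q^n / rho ^ n], normalised, is an approximate quasi-stationary
   distribution on [S], with an error dominated by the Poisson weights of the maximal mean.
   These bounds are uniform in [S], so along an exhausting sequence of truncations a
   diagonal argument extracts a limit [(lam, mu)], and the summable domination lets the
   total mass and the eigen-equation pass to the limit. *)

From Pilot Require Import Defs.
From Stdlib Require Import Reals Lra Lia.
From Stdlib Require Import Classical ClassicalEpsilon.
From HB Require Import structures.
From mathcomp Require Import all_boot.
Open Scope R_scope.

Set Implicit Arguments. Unset Strict Implicit. Unset Printing Implicit Defensive.

Lemma Rplus_assoc_law : associative Rplus. Proof. by move=> *; rewrite Rplus_assoc. Qed.
Lemma Rmult_assoc_law : associative Rmult. Proof. by move=> *; rewrite Rmult_assoc. Qed.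
HB.instance Definition _ :=
  Monoid.isComLaw.Build R 0 Rplus Rplus_assoc_law Rplus_comm Rplus_0_l.
HB.instance Definition _ :=
  Monoid.isComLaw.Build R 1 Rmult Rmult_assoc_law Rmult_comm Rmult_1_l.
HB.instance Definition _ := Monoid.isMulLaw.Build R 0 Rmult Rmult_0_l Rmult_0_r.
HB.instance Definition _ :=
  Monoid.isAddLaw.Build R Rmult Rplus Rmult_plus_distr_r Rmult_plus_distr_l.

Notation sumR l f := (\big[Rplus/0]_(y <- l) f y).

Section FiniteSums.
Variable T : eqType.
Implicit Types (l : seq T) (f g : T -> R).

Lemma sumR_le l f g : (forall x, x \in l -> f x <= g x) -> sumR l f <= sumR l g.
Proof.
elim: l => [|a l IH] le_fg; rewrite ?big_nil ?big_cons; first lra.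
have := le_fg a (mem_head _ _).
suff : sumR l f <= sumR l g by lra.
by apply: IH => x xl; apply: le_fg; rewrite inE xl orbT.
Qed.

Lemma sumR_eq0 l f : (forall x, x \in l -> f x = 0) -> sumR l f = 0.
Proof. by move=> f0; rewrite big_seq big1 // => x /f0. Qed.

Lemma sumR_ge0 l f : (forall x, x \in l -> 0 <= f x) -> 0 <= sumR l f.
Proof.
move=> f_ge0; have := sumR_le (f := fun _ => 0) f_ge0.
by rewrite sumR_eq0.
Qed.

Lemma sumRZ l a f : sumR l (fun x => a * f x) = a * sumR l f.
Proof. by rewrite (big_distrr (times := Rmult)). Qed.

Lemma sumRZr l a f : sumR l (fun x => f x * a) = sumR l f * a.
Proof. by rewrite (big_distrl (times := Rmult)). Qed.

Lemma sumR_term_le l f a : a \in l -> (forall x, x \in l -> 0 <= f x) -> f a <= sumR l f.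
Proof.
move=> al f_ge0; rewrite (big_rem a al) /=.
suff : 0 <= sumR (rem a l) f by lra.
by apply: sumR_ge0 => x /mem_rem; apply: f_ge0.
Qed.

Lemma sumR_subset l1 l2 f : uniq l1 -> uniq l2 -> {subset l1 <= l2} ->
  (forall x, x \in l2 -> 0 <= f x) -> sumR l1 f <= sumR l2 f.
Proof.
elim: l1 l2 => [|a l IH] l2 u1 u2 sub f_ge0; first by rewrite big_nil; apply: sumR_ge0.
rewrite big_cons (big_rem a (sub a (mem_head _ _))) /=.
move: u1 => /= /andP [anl ul].
suff : sumR l f <= sumR (rem a l2) f by lra.
apply: IH => //; first exact: rem_uniq.
  move=> x xl; rewrite (mem_rem_uniq _ u2) inE; apply/andP; split.
    by apply/eqP => xa; move: anl; rewrite -xa xl.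
  by apply: sub; rewrite inE xl orbT.
by move=> x; rewrite (mem_rem_uniq _ u2) inE => /andP [_ /f_ge0].
Qed.

Lemma sumR_split l f (p : pred T) :
  sumR l f = sumR [seq x <- l | p x] f + sumR [seq x <- l | ~~ p x] f.
Proof. by rewrite !big_filter (bigID p). Qed.

Lemma sumR_supp l S f : uniq l -> uniq S -> (forall x, 0 <= f x) ->
  (forall x, x \notin S -> f x = 0) -> sumR l f <= sumR S f.
Proof.
move=> ul uS f_ge0 f0.
rewrite (sumR_split l f (mem S)).
rewrite (sumR_eq0 (l := [seq x <- l | x \notin S])) ?Rplus_0_r; last first.
  by move=> x; rewrite mem_filter => /andP [/f0].
apply: sumR_subset => //; first exact: filter_uniq.
by move=> x; rewrite mem_filter => /andP [].
Qed.

Lemma sumR_dist l f g e : (forall x, x \in l -> Rabs (f x - g x) <= e) ->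
  Rabs (sumR l f - sumR l g) <= INR (size l) * e.
Proof.
elim: l => [|a l IH] fg; first by rewrite !big_nil Rminus_0_r Rabs_R0 /=; lra.
rewrite !big_cons [size _]/= S_INR.
have h1 := fg a (mem_head _ _).
have h2 := IH (fun x xl => fg x (ltac:(by rewrite inE xl orbT))).
have -> : f a + sumR l f - (g a + sumR l g) = (f a - g a) + (sumR l f - sumR l g) by ring.
apply: Rle_trans (Rabs_triang _ _) _; lra.
Qed.

Lemma sumR_delta l f x0 : uniq l -> x0 \in l ->
  sumR l (fun x => (if x == x0 then 1 else 0) * f x) = f x0.
Proof.
move=> ul x0l; rewrite (big_rem x0 x0l) /= eqxx sumR_eq0; first lra.
by move=> x; rewrite (mem_rem_uniq _ ul) inE => /andP [/negbTE -> _]; lra.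
Qed.

End FiniteSums.

Lemma sumR_ord_const n c : \big[Rplus/0]_(k < n) c = INR n * c.
Proof.
elim: n => [|n IH]; first by rewrite big_ord0 /=; ring.
by rewrite big_ord_recr IH S_INR /=; ring.
Qed.

Section HasSum.
Variables (T : eqType) (P : T -> Prop).
Implicit Types (l : seq T) (f : T -> R).

Definition admissible l := uniq l /\ forall y, y \in l -> P y.

Lemma admissible_nil : admissible [::].
Proof. by split. Qed.

Lemma has_sum_ub f s l : has_sum P f s -> admissible l -> sumR l f <= s.
Proof. by move=> [ub _] [ul lP]; apply: ub; exists l. Qed.

Lemma has_sum_least f s M : has_sum P f s ->
  (forall l, admissible l -> sumR l f <= M) -> s <= M.
Proof. by move=> [_ least] HM; apply: least => r [l [ul [lP ->]]]; apply: HM. Qed.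

Lemma has_sumI f s : (forall l, admissible l -> sumR l f <= s) ->
  (forall M, (forall l, admissible l -> sumR l f <= M) -> s <= M) -> has_sum P f s.
Proof.
move=> ub least; split; first by move=> r [l [ul [lP ->]]]; apply: ub.
by move=> M HM; apply: least => l [ul lP]; apply: HM; exists l.
Qed.

Lemma has_sum_bounded f M : (forall l, admissible l -> sumR l f <= M) ->
  exists2 s, has_sum P f s & s <= M.
Proof.
move=> HM.
pose E r := exists l, uniq l /\ (forall y, y \in l -> P y) /\ r = sumR l f.
have E_bnd : bound E by exists M => r [l [ul [lP ->]]]; apply: HM.
have E_ne : exists r, E r by exists 0, [::]; rewrite big_nil.
have [s s_lub] := completeness E E_bnd E_ne.
exists s => //; apply: (proj2 s_lub) => r [l [ul [lP ->]]]; exact: HM.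
Qed.

Lemma has_sum_tail f s e : has_sum P f s -> 0 < e ->
  exists2 K, uniq K & forall l, admissible l -> (forall y, y \in l -> y \notin K) ->
    sumR l f <= e.
Proof.
move=> fs e_gt0.
have [K [uK KP] sK] : exists2 K, admissible K & s - e < sumR K f.
  apply: NNPP => none; suff : s <= s - e by lra.
  apply: (has_sum_least fs) => l lA; apply: Rnot_lt_le => lt; apply: none; by exists l.
exists K => // l [ul lP] lK.
suff : sumR (K ++ l) f <= s by rewrite big_cat /=; lra.
apply: (has_sum_ub fs); split.
  by rewrite cat_uniq uK ul andbT /=; apply/hasPn => y /lK.
by move=> y; rewrite mem_cat => /orP [/KP|/lP].
Qed.

Lemma has_sumZ f s a : 0 <= a -> has_sum P f s -> has_sum P (fun x => a * f x) (a * s).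
Proof.
move=> a_ge0 fs; apply: has_sumI => [l lA|M HM].
  by rewrite sumRZ; apply: Rmult_le_compat_l => //; apply: has_sum_ub.
have [->|a_gt0] : a = 0 \/ 0 < a by lra.
  by have := HM [::] admissible_nil; rewrite big_nil; lra.
have aMa : a * (M / a) = M by field; lra.
suff : s <= M / a by move=> /(Rmult_le_compat_l a _ _ a_ge0); rewrite aMa.
apply: (has_sum_least fs) => l lA; have := HM l lA; rewrite sumRZ => aM.
by apply: (Rmult_le_reg_l a) => //; rewrite aMa.
Qed.

End HasSum.

Lemma has_sum_supp (T : eqType) (S : seq T) (f : T -> R) : uniq S ->
  (forall x, 0 <= f x) -> (forall x, x \notin S -> f x = 0) ->
  has_sum (fun _ => True) f (sumR S f).
Proof.
move=> uS f_ge0 f0; apply: has_sumI => [l [ul _]|M HM]; first exact: sumR_supp.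
exact: HM.
Qed.

Section Tonelli.
Variables (T : eqType) (P1 P2 : T -> Prop) (f : T -> T -> R) (r : T -> R).
Hypotheses (f_ge0 : forall x y, 0 <= f x y)
  (row_sum : forall x, P1 x -> has_sum P2 (f x) (r x)).

Lemma sumR_row_sums_le l M : admissible P1 l ->
  (forall l', admissible P2 l' -> sumR l (fun x => sumR l' (f x)) <= M) ->
  sumR l r <= M.
Proof.
elim: l M => [|a l IH] M [/= ul lP] HM.
  by have := HM [::] (admissible_nil P2); rewrite !big_nil.
rewrite big_cons; move: ul => /andP [anl ul].
suff : r a <= M - sumR l r by lra.
apply: (has_sum_least (row_sum (lP a (mem_head _ _)))) => l' [ul' l'P].
suff : sumR l r <= M - sumR l' (f a) by lra.
apply: IH; first by split=> // x xl; apply: lP; rewrite inE xl orbT.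
move=> l'' [ul'' l''P].
pose l3 := undup (l' ++ l'').
have l3A : admissible P2 l3.
  by split=> [|y]; [exact: undup_uniq | rewrite mem_undup mem_cat => /orP [/l'P|/l''P]].
have := HM l3 l3A; rewrite big_cons.
have le1 : sumR l' (f a) <= sumR l3 (f a).
  by apply: sumR_subset => // [|y yl]; [exact: undup_uniq | rewrite mem_undup mem_cat yl].
have le2 : sumR l (fun x => sumR l'' (f x)) <= sumR l (fun x => sumR l3 (f x)).
  apply: sumR_le => x _; apply: sumR_subset => //; first exact: undup_uniq.
  by move=> y yl; rewrite mem_undup mem_cat yl orbT.
lra.
Qed.

End Tonelli.

Lemma has_sum_swap (T : eqType) (P1 P2 : T -> Prop) (f : T -> T -> R) (r c : T -> R) C :
  (forall x y, 0 <= f x y) ->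
  (forall x, P1 x -> has_sum P2 (f x) (r x)) ->
  (forall y, P2 y -> has_sum P1 (fun x => f x y) (c y)) ->
  has_sum P2 c C -> has_sum P1 r C.
Proof.
move=> f_ge0 rows cols cC; apply: has_sumI => [l lA|M HM].
  apply: (sumR_row_sums_le f_ge0 rows lA) => l' l'A.
  rewrite exchange_big /=; apply: Rle_trans (has_sum_ub cC l'A).
  apply: sumR_le => y yl'; apply: (has_sum_ub (cols y _) lA); exact: l'A.2.
apply: (has_sum_least cC) => l' l'A.
apply: (@sumR_row_sums_le T P2 P1 (fun y x => f x y) c) => // l lA.
rewrite exchange_big /=; apply: Rle_trans (HM l lA).
apply: sumR_le => x xl; apply: (has_sum_ub (rows x _) l'A); exact: lA.2.
Qed.

Lemma le_of_le_add_mul x y C : 0 <= C -> (forall d, 0 < d -> x <= y + C * d) -> x <= y.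
Proof.
move=> C_ge0 le_xy; apply: Rle_plus_epsilon => e e_gt0.
have d_gt0 : 0 < e / (C + 1) by apply: Rdiv_lt_0_compat; lra.
have := le_xy _ d_gt0.
suff : C * (e / (C + 1)) <= e by lra.
apply: Rle_trans (_ : (C + 1) * (e / (C + 1)) <= _); last by right; field; lra.
by apply: Rmult_le_compat_r; [exact: Rlt_le | lra].
Qed.

Lemma sumR_close_le (T : eqType) (l : seq T) (f g : T -> R) d :
  (forall x, x \in l -> Rabs (g x - f x) <= d) -> sumR l g <= sumR l f + INR (size l) * d.
Proof. by move=> close; have := Rle_abs (sumR l g - sumR l f); have := sumR_dist close; lra. Qed.

Lemma has_sum_le_head_tail (T : eqType) (g D : T -> R) (a d : R) (K : seq T) :
  has_sum (fun _ => True) g a -> (forall x, 0 <= g x <= D x) -> uniq K ->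
  (forall l, admissible (fun _ => True) l -> (forall y, y \in l -> y \notin K) ->
     sumR l D <= d) ->
  a <= sumR K g + d.
Proof.
move=> ga g_bnd uK tailK; apply: (has_sum_least ga) => l [ul _].
rewrite (sumR_split l g (fun y => y \in K)).
have in_K : sumR [seq y <- l | y \in K] g <= sumR K g.
  apply: sumR_subset => //; first exact: filter_uniq.
    by move=> y; rewrite mem_filter => /andP [].
  by move=> y _; have := g_bnd y; lra.
suff : sumR [seq y <- l | y \notin K] g <= d by lra.
apply: Rle_trans (_ : sumR [seq y <- l | y \notin K] D <= _).
  by apply: sumR_le => y _; have := g_bnd y; lra.
apply: tailK; first by split=> //; exact: filter_uniq.
by move=> y; rewrite mem_filter => /andP [].
Qed.

Lemma split_tolerance n d : 0 < d ->
  0 < d / INR n.+1 <= d /\ INR n * (d / INR n.+1) <= d.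
Proof.
move=> d_gt0; have n_ge0 := pos_INR n.
have e_gt0 : 0 < d / INR n.+1 by apply: Rdiv_lt_0_compat; [lra | apply: lt_0_INR; lia].
have e_mul : (INR n + 1) * (d / INR n.+1) = d by rewrite -S_INR; field; apply: not_0_INR.
by split; [split|]; nra.
Qed.

(* Dominated convergence for sums along a cluster point: [g N] need not converge, it
   suffices that some [N] brings [g N] close to [f] on any finite set, together with
   its total [a N] close to [s]. *)
Lemma has_sum_dominated_cluster (T : eqType) (g : nat -> T -> R) (a : nat -> R)
    (D f : T -> R) (s TD : R) :
  has_sum (fun _ => True) D TD ->
  (forall N x, 0 <= g N x <= D x) ->
  (forall N, has_sum (fun _ => True) (g N) (a N)) ->
  (forall (l : seq T) d, 0 < d -> exists N, Rabs (a N - s) <= d /\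
     forall x, x \in l -> Rabs (g N x - f x) <= d) ->
  has_sum (fun _ => True) f s.
Proof.
move=> DTD g_bnd ga close.
apply: has_sumI => [l [ul _]|M HM].
  apply: (le_of_le_add_mul (C := INR (size l) + 1)) => [|d d_gt0].
    by have := pos_INR (size l); lra.
  have [N [aN fgN]] := close l d d_gt0.
  have f_gN : sumR l f <= sumR l (g N) + INR (size l) * d.
    by apply: sumR_close_le => x /fgN; rewrite Rabs_minus_sym.
  have := has_sum_ub (ga N) (conj ul (fun _ _ => I)).
  have := Rle_abs (a N - s); lra.
apply: (le_of_le_add_mul (C := 3)) => [|d d_gt0]; first lra.
have [K uK tailK] := has_sum_tail DTD d_gt0.
have [[e_gt0 e_le] Ke_le] := split_tolerance (size K) d_gt0.
have [N [aN fgN]] := close K _ e_gt0.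
have aN_le := has_sum_le_head_tail (ga N) (g_bnd N) uK tailK.
have gN_f := sumR_close_le fgN.
have := HM K (conj uK (fun _ _ => I)); have := Rle_abs (s - a N); rewrite Rabs_minus_sym.
lra.
Qed.

Section DiagonalCluster.
Variables (f : nat -> nat -> R) (K : nat -> R).
Hypothesis f_bnd : forall N m, 0 <= f N m <= K m.

Definition close_on (c : nat -> R) M d N := forall m, (m < M)%nat -> Rabs (f N m - c m) < d.

(* [r] is below [f N M] for infinitely many [N] keeping the first [M] coordinates
   within any tolerance of [c]; the supremum of such [r] is a limsup. *)
Definition frequent_lb c M r := r <= 0 \/
  forall d, 0 < d -> forall n0, exists N, (n0 <= N)%nat /\ close_on c M d N /\ r <= f N M.

Lemma frequent_lb_bound c M : bound (frequent_lb c M).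
Proof.
exists (K M) => r [r_le0|frequent]; first by have := f_bnd 0 M; lra.
have [N [_ [_ rN]]] := frequent 1 Rlt_0_1 0%nat; have := f_bnd N M; lra.
Qed.

Lemma frequent_lb_ne c M : exists r, frequent_lb c M r.
Proof. by exists 0; left; lra. Qed.

Definition limsup_next c M : R :=
  proj1_sig (completeness _ (frequent_lb_bound c M) (frequent_lb_ne c M)).

Lemma limsup_nextP c M : is_lub (frequent_lb c M) (limsup_next c M).
Proof. exact: proj2_sig (completeness _ (frequent_lb_bound c M) (frequent_lb_ne c M)). Qed.

Lemma limsup_next_above c M e : 0 < e -> exists d, 0 < d /\ exists n1, forall N,
  (n1 <= N)%nat -> close_on c M d N -> f N M < limsup_next c M + e.
Proof.
move=> e_gt0; have [ub _] := limsup_nextP c M.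
apply: NNPP => none; suff : limsup_next c M + e <= limsup_next c M by lra.
apply: ub; right => d d_gt0 n1; apply: NNPP => none2; apply: none.
exists d; split => //; exists n1 => N n1N closeN.
by apply: Rnot_le_lt => le; apply: none2; exists N.
Qed.

Lemma limsup_next_below c M e : 0 < e ->
  exists r, frequent_lb c M r /\ limsup_next c M - e < r.
Proof.
move=> e_gt0; have [_ least] := limsup_nextP c M.
apply: NNPP => none; suff : limsup_next c M <= limsup_next c M - e by lra.
by apply: least => r fr; apply: Rnot_lt_le => lt; apply: none; exists r.
Qed.

Fixpoint prefix (M : nat) : nat -> R :=
  if M is M'.+1 then fun m => if (m < M')%nat then prefix M' m else limsup_next (prefix M') M'
  else fun _ => 0.

Definition diagonal_limit (m : nat) : R := prefix m.+1 m.

Lemma prefix_stable M m : (m < M)%nat -> prefix M m = diagonal_limit m.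
Proof.
elim: M => [//|M IH] mM /=; case: ltnP => [/IH //|Mm].
have -> : m = M by apply/eqP; rewrite eqn_leq Mm andbT -ltnS.
by rewrite /diagonal_limit /= ltnn.
Qed.

Lemma close_on_prefix M d N : close_on (prefix M) M d N <-> close_on diagonal_limit M d N.
Proof.
by split => h m mM; [rewrite -(prefix_stable mM) | rewrite (prefix_stable mM)]; apply: h.
Qed.

Lemma diagonal_limit_cluster M d : 0 < d -> forall n0,
  exists N, (n0 <= N)%nat /\ close_on diagonal_limit M d N.
Proof.
elim: M d => [|M IH] d d_gt0 n0; first by exists n0; split => // m.
have d2_gt0 : 0 < d / 2 by lra.
have [d1 [d1_gt0 [n1 above]]] := limsup_next_above (prefix M) M d2_gt0.
have [r [fr below]] := limsup_next_below (prefix M) M d2_gt0.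
set L := limsup_next (prefix M) M in above below *.
pose d' := Rmin d d1.
have d'_gt0 : 0 < d' by apply: Rmin_pos.
have d'_le_d : d' <= d by apply: Rmin_l.
have d'_le_d1 : d' <= d1 by apply: Rmin_r.
have [N [n0n1N [closeN fN]]] : exists N, (maxn n0 n1 <= N)%nat /\
    close_on diagonal_limit M d' N /\ L - d / 2 < f N M.
  case: fr => [r_le0|frequent].
    have [N [le closeN]] := IH d' d'_gt0 (maxn n0 n1).
    by exists N; do 2!split => //; have := f_bnd N M; lra.
  have [N [le [closeN rN]]] := frequent d' d'_gt0 (maxn n0 n1).
  by exists N; do 2!split => //; [apply/close_on_prefix | lra].
have fN_above : f N M < L + d / 2.
  apply: above; first by apply: leq_trans n0n1N; apply: leq_maxr.
  apply/close_on_prefix => m mM; have := closeN m mM; lra.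
exists N; split; first by apply: leq_trans n0n1N; apply: leq_maxl.
move=> m; rewrite ltnS leq_eqVlt => /orP [/eqP ->|mM].
  by rewrite /diagonal_limit /= ltnn -/L; apply: Rabs_def1; lra.
have := closeN m mM; lra.
Qed.

End DiagonalCluster.

Lemma ln_le_ln x y : 0 < x -> x <= y -> ln x <= ln y.
Proof. by move=> x_gt0 [lt|->]; [left; apply: ln_increasing | lra]. Qed.

Lemma ln_le_ln_inv x y : 0 < x -> 0 < y -> ln x <= ln y -> x <= y.
Proof.
move=> x_gt0 y_gt0 le; apply: Rnot_lt_le => lt.
by have := ln_increasing _ _ y_gt0 lt; lra.
Qed.

Section AlmostAdditive.
Variables (u : nat -> R) (A B : R).
Hypotheses (u_sub : forall k l, u (k + l) <= u k + u l + B)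
  (u_super : forall k l, u k + u l - A <= u (k + l)).

Lemma u0_bounds : - B <= u 0 <= A.
Proof. by have := u_sub 0 0; have := u_super 0 0; rewrite addn0; lra. Qed.

Lemma u_mul_le m k : u (m.+1 * k) + B <= INR m.+1 * (u k + B).
Proof.
elim: m => [|m IH]; first by rewrite mul1n /=; lra.
by rewrite mulSn S_INR; have := u_sub k (m.+1 * k); lra.
Qed.

Lemma u_mul_ge m k : INR m.+1 * (u k - A) <= u (m.+1 * k) - A.
Proof.
elim: m => [|m IH]; first by rewrite mul1n /=; lra.
by rewrite mulSn S_INR; have := u_super k (m.+1 * k); lra.
Qed.

(* Fekete's lemma: the rate is [inf_j (u j + B) / j], and the gap between the two
   normalisations is bridged through [u (j * k)]. *)
Lemma u_ratio_le j k : INR j.+1 * (u k.+1 - A) <= INR k.+1 * (u j.+1 + B).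
Proof.
have := u_mul_ge j k.+1; have := u_mul_le k j.+1; have := u0_bounds.
by rewrite mulnC; lra.
Qed.

Lemma almost_additive_linear : exists L, forall k, INR k * L - B <= u k <= INR k * L + A.
Proof.
pose E z := exists j, z = - ((u j.+1 + B) / INR j.+1).
have E_bnd : bound E.
  exists (- (u 1 - A)) => _ [j ->]; have j_gt0 : 0 < INR j.+1 by apply: lt_0_INR; lia.
  suff : u 1 - A <= (u j.+1 + B) / INR j.+1 by lra.
  apply: (Rmult_le_reg_r (INR j.+1)) => //; rewrite /Rdiv Rmult_assoc Rinv_l; last lra.
  by have := u_ratio_le j 0; rewrite /= Rmult_1_r; lra.
have E_ne : exists z, E z by exists (- ((u 1 + B) / INR 1)), 0%nat.
have [S [S_ub S_least]] := completeness E E_bnd E_ne.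
exists (- S); case=> [|k]; first by have := u0_bounds; rewrite /= Rmult_0_l; lra.
have k_gt0 : 0 < INR k.+1 by apply: lt_0_INR; lia.
split.
  have := S_ub _ (ex_intro _ k erefl).
  move=> /(Rmult_le_compat_l (INR k.+1) _ _ (Rlt_le _ _ k_gt0)).
  have -> : INR k.+1 * - ((u k.+1 + B) / INR k.+1) = - (u k.+1 + B) by field; lra.
  lra.
suff : S <= - ((u k.+1 - A) / INR k.+1).
  move=> /(Rmult_le_compat_l (INR k.+1) _ _ (Rlt_le _ _ k_gt0)).
  have -> : INR k.+1 * - ((u k.+1 - A) / INR k.+1) = - (u k.+1 - A) by field; lra.
  lra.
apply: S_least => _ [j ->]; have j_gt0 : 0 < INR j.+1 by apply: lt_0_INR; lia.
suff : (u k.+1 - A) / INR k.+1 <= (u j.+1 + B) / INR j.+1 by lra.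
apply: (Rmult_le_reg_r (INR k.+1 * INR j.+1)); first exact: Rmult_lt_0_compat.
have -> : (u k.+1 - A) / INR k.+1 * (INR k.+1 * INR j.+1) = INR j.+1 * (u k.+1 - A).
  by field; lra.
have -> : (u j.+1 + B) / INR j.+1 * (INR k.+1 * INR j.+1) = INR k.+1 * (u j.+1 + B).
  by field; lra.
exact: u_ratio_le.
Qed.

End AlmostAdditive.

Lemma almost_multiplicative_geometric (s : nat -> R) a b : 0 < a -> (forall k, 0 < s k) ->
  (forall k l, a * s k * s l <= s (k + l)%nat <= b * s k * s l) ->
  exists2 rho, 0 < rho & forall k, rho ^ k / b <= s k <= rho ^ k / a.
Proof.
move=> a_gt0 s_gt0 s_mul.
have b_gt0 : 0 < b.
  have := s_mul 0%nat 0%nat; have := s_gt0 0%nat; have := s_gt0 (0 + 0)%nat; nra.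
have ln_s k l : ln (s k) + ln (s l) + ln a <= ln (s (k + l)%nat) <= ln (s k) + ln (s l) + ln b.
  have sk := s_gt0 k; have sl := s_gt0 l.
  have ask : 0 < a * s k by apply: Rmult_lt_0_compat.
  have bsk : 0 < b * s k by apply: Rmult_lt_0_compat.
  have [lo hi] := s_mul k l.
  have lo' := ln_le_ln (Rmult_lt_0_compat _ _ ask sl) lo.
  have hi' := ln_le_ln (s_gt0 _) hi.
  by rewrite !ln_mult // in lo' hi'; lra.
have [L uL] := almost_additive_linear (u := fun k => ln (s k)) (A := - ln a) (B := ln b)
  (fun k l => proj2 (ln_s k l)) (fun k l => ltac:(have := proj1 (ln_s k l); lra)).
exists (exp L) => [|k]; first exact: exp_pos.
have rk_gt0 : 0 < exp L ^ k by apply: pow_lt; apply: exp_pos.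
have ln_rk : ln (exp L ^ k) = INR k * L by rewrite ln_pow ?ln_exp //; apply: exp_pos.
have [lo hi] := uL k.
have rb : 0 < exp L ^ k / b by apply: Rdiv_lt_0_compat.
have ra : 0 < exp L ^ k / a by apply: Rdiv_lt_0_compat.
have ib : 0 < / b by apply: Rinv_0_lt_compat.
have ia : 0 < / a by apply: Rinv_0_lt_compat.
by split; apply: ln_le_ln_inv => //; rewrite /Rdiv ln_mult // ln_Rinv // ln_rk; lra.
Qed.

Lemma pow_le_geometric x y C : 0 < x -> 0 < y -> (forall k, x ^ k <= C * y ^ k) -> x <= y.
Proof.
move=> x_gt0 y_gt0 le_xy; apply: Rnot_lt_le => yx.
have [N big] : exists N, forall n, (n >= N)%coq_nat -> Rabs ((x / y) ^ n) >= C + 1.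
  have xy_gt0 : 0 < x / y by apply: Rdiv_lt_0_compat.
  apply: Pow_x_infinity; rewrite Rabs_pos_eq; last exact: Rlt_le.
  by apply: (Rmult_gt_reg_l y) => //; field_simplify; lra.
have xy_gt0 : 0 < x / y by apply: Rdiv_lt_0_compat.
have := big N (le_n N); rewrite Rabs_pos_eq; last by apply: pow_le; lra.
rewrite Rpow_mult_distr pow_inv; have yN := pow_lt _ N y_gt0; have := le_xy N.
move=> le ge; suff : x ^ N * / y ^ N <= C by lra.
apply: (Rmult_le_reg_r (y ^ N)) => //; rewrite Rmult_assoc Rinv_l; lra.
Qed.

Lemma seq_min_pos (A : eqType) (l : seq A) (h : A -> R) :
  (forall x, x \in l -> 0 < h x) -> exists2 m, 0 < m & forall x, x \in l -> m <= h x.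
Proof.
elim: l => [|a l IH] h_gt0; first by exists 1 => //; lra.
have [m m_gt0 mh] := IH (fun x xl => h_gt0 x (ltac:(by rewrite inE xl orbT))).
have ha := h_gt0 a (mem_head _ _).
exists (Rmin (h a) m); first exact: Rmin_pos.
move=> x; rewrite inE => /orP [/eqP ->|/mh]; [exact: Rmin_l | have := Rmin_r (h a) m; lra].
Qed.

Section FiniteKernel.
Variables (T : eqType) (S : seq T) (x0 : T) (Q : T -> T -> R) (G : T -> R) (r : R).
Hypotheses (uS : uniq S) (x0S : x0 \in S)
  (Q_ge0 : forall x y, 0 <= Q x y)
  (Q_gt0 : forall x y, x \in S -> y \in S -> 0 < Q x y)
  (Q_le_G : forall x y, x \in S -> Q x y <= G y)
  (Q_row : forall x, x \in S -> sumR S (Q x) <= r).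

(* [survival n x] is the probability that the chain started at [x] stays in [S] for [n]
   steps; [evolve v n] is the measure [v Q^n] of the chain killed outside [S]. *)
Fixpoint survival n x : R :=
  if n is n'.+1 then sumR S (fun u => Q x u * survival n' u) else 1.

Fixpoint evolve (v : T -> R) n y : R :=
  if n is n'.+1 then sumR S (fun x => evolve v n' x * Q x y) else v y.

Definition dirac y : R := if y == x0 then 1 else 0.

Lemma dirac_ge0 y : 0 <= dirac y.
Proof. by rewrite /dirac; case: eqP => _; lra. Qed.

Lemma evolve_ge0 v n y : (forall y, 0 <= v y) -> 0 <= evolve v n y.
Proof.
move=> v_ge0; elim: n y => [|n IH] y //=.
by apply: sumR_ge0 => x _; apply: Rmult_le_pos.
Qed.

Lemma evolveD v k l y : evolve v (k + l) y = evolve (evolve v k) l y.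
Proof.
by elim: l y => [|l IH] y; rewrite ?addn0 // addnS /=; apply: eq_bigr => x _; rewrite IH.
Qed.

Lemma sumR_evolve n v : sumR S (evolve v n) = sumR S (fun x => v x * survival n x).
Proof.
elim: n v => [|n IH] v; first by apply: eq_bigr => x _; rewrite Rmult_1_r.
rewrite (eq_bigr _ (fun y _ => evolveD v 1 n y)) IH /=.
rewrite (eq_bigr (fun x => sumR S (fun u => v u * Q u x * survival n x))); last first.
  by move=> x _; rewrite sumRZr.
rewrite exchange_big /=; apply: eq_bigr => u _.
by rewrite -sumRZ; apply: eq_bigr => x _; ring.
Qed.

Lemma survival_ge0 n x : 0 <= survival n x.
Proof.
elim: n x => [|n IH] x /=; first lra.
by apply: sumR_ge0 => u _; apply: Rmult_le_pos.
Qed.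

Lemma survival_ge_pow n : Q x0 x0 ^ n <= survival n x0.
Proof.
elim: n => [|n IH] /=; first lra.
apply: Rle_trans (sumR_term_le (f := fun u => Q x0 u * survival n u) x0S _).
  exact: Rmult_le_compat_l.
by move=> u _; apply: Rmult_le_pos; [|apply: survival_ge0].
Qed.

Lemma survival_le_pow n x : x \in S -> survival n x <= r ^ n.
Proof.
have r_ge0 : 0 <= r.
  have := Q_row x0S; have := sumR_ge0 (fun u (_ : u \in S) => Q_ge0 x0 u); lra.
elim: n x => [|n IH] x xS /=; first lra.
apply: Rle_trans (_ : sumR S (fun u => Q x u * r ^ n) <= _).
  by apply: sumR_le => u uS'; apply: Rmult_le_compat_l; [|apply: IH].
by rewrite sumRZr; apply: Rmult_le_compat_r; [apply: pow_le | apply: Q_row].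
Qed.

Lemma survival_gt0 n x : x \in S -> 0 < survival n x.
Proof.
move=> xS; case: n => [|n] /=; first lra.
apply: Rlt_le_trans (sumR_term_le (f := fun u => Q x u * survival n u) x0S _).
  apply: Rmult_lt_0_compat; first exact: Q_gt0.
  by apply: Rlt_le_trans (survival_ge_pow n); apply: pow_lt; apply: Q_gt0.
by move=> u _; apply: Rmult_le_pos; [|apply: survival_ge0].
Qed.

(* Positivity of [Q] on the finite set [S] makes all rows comparable to the row of [x0]. *)
Lemma survival_comparable : exists a b, 0 < a /\
  forall n x, x \in S -> a * survival n x0 <= survival n x <= b * survival n x0.
Proof.
pose SS := [seq (x, u) | x <- S, u <- S].
have [al al_gt0 al_le] := seq_min_pos (l := SS) (h := fun p => Q p.1 p.2 / Q x0 p.2)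
  (fun p => ltac:(case/allpairsP => -[x u] [xS uS' ->] /=;
                  by apply: Rdiv_lt_0_compat; apply: Q_gt0)).
have [be be_gt0 be_le] := seq_min_pos (l := SS) (h := fun p => Q x0 p.2 / Q p.1 p.2)
  (fun p => ltac:(case/allpairsP => -[x u] [xS uS' ->] /=;
                  by apply: Rdiv_lt_0_compat; apply: Q_gt0)).
exists (Rmin 1 al), (Rmax 1 (/ be)); split; first by apply: Rmin_pos; lra.
have a_le := Rmin_r 1 al; have b_ge := Rmax_r 1 (/ be).
case=> [|n] x xS /=; first by have := Rmin_l 1 al; have := Rmax_l 1 (/ be); lra.
have sn_ge0 : 0 <= sumR S (fun u => Q x0 u * survival n u).
  by apply: sumR_ge0 => u _; apply: Rmult_le_pos; [|apply: survival_ge0].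
split.
  apply: Rle_trans (_ : al * sumR S (fun u => Q x0 u * survival n u) <= _).
    exact: Rmult_le_compat_r.
  rewrite -sumRZ; apply: sumR_le => u uS'; rewrite -Rmult_assoc.
  apply: Rmult_le_compat_r; first exact: survival_ge0.
  have := al_le (x, u) (allpairs_f pair xS uS'); have := Q_gt0 x0S uS' => /= q0 le.
  apply: Rle_trans (_ : Q x u / Q x0 u * Q x0 u <= _); first exact: Rmult_le_compat_r.
  by right; field; lra.
apply: Rle_trans (_ : / be * sumR S (fun u => Q x0 u * survival n u) <= _); last first.
  exact: Rmult_le_compat_r.
rewrite -sumRZ; apply: sumR_le => u uS'; rewrite -Rmult_assoc.
apply: Rmult_le_compat_r; first exact: survival_ge0.
have := be_le (x, u) (allpairs_f pair xS uS'); have := Q_gt0 xS uS' => /= q le.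
have be_Q : be * Q x u <= Q x0 u.
  apply: Rle_trans (_ : Q x0 u / Q x u * Q x u <= _); first exact: Rmult_le_compat_r.
  by right; field; lra.
apply: Rle_trans (_ : / be * (be * Q x u) <= _); first by right; field; lra.
by apply: Rmult_le_compat_l => //; left; apply: Rinv_0_lt_compat.
Qed.

Lemma sumR_evolve_dirac k : sumR S (evolve dirac k) = survival k x0.
Proof. by rewrite sumR_evolve /dirac sumR_delta. Qed.

Lemma survivalD k l : survival (k + l) x0 = sumR S (fun x => evolve dirac k x * survival l x).
Proof.
by rewrite -sumR_evolve_dirac -sumR_evolve; apply: eq_bigr => x _; rewrite evolveD.
Qed.

Lemma survival_rate : exists rho a b, [/\ 0 < rho, 0 < a, 0 < b, Q x0 x0 <= rho <= r &
  forall n, rho ^ n / b <= survival n x0 <= rho ^ n / a].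
Proof.
have [a [b [a_gt0 comparable]]] := survival_comparable.
have b_gt0 : 0 < b by have := comparable 0%nat x0 x0S; rewrite /=; lra.
have s_mul k l : a * survival k x0 * survival l x0 <= survival (k + l) x0 <=
                 b * survival k x0 * survival l x0.
  rewrite survivalD -sumR_evolve_dirac -!sumRZ -!sumRZr; split; apply: sumR_le => x xS;
  have e_ge0 := evolve_ge0 k x dirac_ge0; have [lo hi] := comparable l x xS; nra.
have [rho rho_gt0 rho_bnd] := almost_multiplicative_geometric a_gt0
  (fun n => survival_gt0 n x0S) s_mul.
exists rho, a, b; split => //; split.
  apply: (pow_le_geometric (C := / a)) => // [|n]; first exact: Q_gt0.
  have := survival_ge_pow n; have := rho_bnd n; rewrite /Rdiv Rmult_comm; lra.
apply: (pow_le_geometric (C := b)) => // [|n].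
  apply: Rlt_le_trans (Q_gt0 x0S x0S) _.
  by have := survival_ge_pow 1; have := survival_le_pow 1 x0S; rewrite /=; lra.
have := survival_le_pow n x0S; have := rho_bnd n => -[lo _] hi.
have rn_ge0 : 0 <= rho ^ n by apply: pow_le; lra.
apply: Rle_trans (_ : b * survival n x0 <= _); last by apply: Rmult_le_compat_l; lra.
apply: Rle_trans (_ : b * (rho ^ n / b) <= _); first by right; field; lra.
by apply: Rmult_le_compat_l; lra.
Qed.

Record approx_qsd (eta rho : R) (nu : T -> R) : Prop := ApproxQSD {
  approx_qsd_rate : Q x0 x0 <= rho <= r;
  approx_qsd_ge0 : forall y, 0 <= nu y;
  approx_qsd_supp : forall y, y \notin S -> nu y = 0;
  approx_qsd_mass : sumR S nu = 1;
  approx_qsd_eigen : forall y, y \in S ->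
    Rabs (sumR S (fun x => nu x * Q x y) - rho * nu y) <= eta * G y }.

Section Cesaro.
Variables (rho a b : R).
Hypotheses (rho_gt0 : 0 < rho) (a_gt0 : 0 < a) (b_gt0 : 0 < b)
  (rho_bnd : Q x0 x0 <= rho <= r)
  (rho_rate : forall n, rho ^ n / b <= survival n x0 <= rho ^ n / a).

(* Normalising [x0 Q^k] by the exact growth rate [rho ^ k] keeps every term of mass of
   order one, so the time average is an approximate left eigenvector. *)
Definition cesaro n y := \big[Rplus/0]_(k < n) (evolve dirac k y / rho ^ k).

Lemma cesaro_ge0 n y : 0 <= cesaro n y.
Proof.
apply: (big_ind (fun x => 0 <= x)) => [|*|k _]; try lra.
apply: Rmult_le_pos; first exact: evolve_ge0 dirac_ge0.
by left; apply: Rinv_0_lt_compat; apply: pow_lt.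
Qed.

Lemma cesaro_mass n : INR n / b <= sumR S (cesaro n).
Proof.
rewrite /cesaro exchange_big /=.
apply: Rle_trans (_ : \big[Rplus/0]_(k < n) (/ b) <= _); first by rewrite sumR_ord_const; right.
apply: (big_ind2 (fun x y => x <= y)) => [|*|k _]; try lra.
rewrite /Rdiv sumRZr sumR_evolve_dirac; have := rho_rate k => -[lo _].
have rk := pow_lt _ k rho_gt0.
apply: Rle_trans (_ : rho ^ k / b * / rho ^ k <= _); first by right; field; split; lra.
by apply: Rmult_le_compat_r => //; left; apply: Rinv_0_lt_compat.
Qed.

Lemma cesaro_step n y : sumR S (fun x => cesaro n x * Q x y) =
  rho * (cesaro n y - dirac y + evolve dirac n y / rho ^ n).
Proof.
pose c k := evolve dirac k y / rho ^ k.
have shift : \big[Rplus/0]_(k < n) c k.+1 = cesaro n y - dirac y + c n.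
  have e1 : cesaro n.+1 y = cesaro n y + c n by rewrite /cesaro big_ord_recr.
  have e2 : cesaro n.+1 y = dirac y + \big[Rplus/0]_(k < n) c k.+1.
    rewrite /cesaro big_ord_recl; congr (_ + _); first by rewrite /= /Rdiv Rinv_1 Rmult_1_r.
  clearbody c; lra.
transitivity (rho * \big[Rplus/0]_(k < n) c k.+1); last by rewrite shift.
rewrite (big_distrr (times := Rmult)) /=.
rewrite (eq_bigr (fun x => \big[Rplus/0]_(k < n) (evolve dirac k x / rho ^ k * Q x y))); last first.
  by move=> x _; rewrite (big_distrl (times := Rmult)).
rewrite exchange_big /=; apply: eq_bigr => k _.
rewrite (eq_bigr (fun x => evolve dirac k x * Q x y * / rho ^ k)); last first.
  by move=> x _; rewrite /Rdiv; ring.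
rewrite sumRZr /c /=; field; split; [apply: pow_nonzero|]; lra.
Qed.

Lemma G_x0_gt0 : 0 < G x0.
Proof. exact: Rlt_le_trans (Q_gt0 x0S x0S) (Q_le_G x0 x0S). Qed.

Lemma evolve_dirac_le n y : evolve dirac n.+1 y <= survival n x0 * G y.
Proof.
rewrite /= -sumR_evolve_dirac -sumRZr; apply: sumR_le => x xS.
by apply: Rmult_le_compat_l; [apply: evolve_ge0 dirac_ge0 | apply: Q_le_G].
Qed.

Lemma cesaro_defect n y :
  Rabs (sumR S (fun x => cesaro n.+1 x * Q x y) - rho * cesaro n.+1 y)
    <= (/ a + rho / G x0) * G y.
Proof.
have G0 := G_x0_gt0; have G_ge0 : 0 <= G y.
  exact: Rle_trans (Q_ge0 x0 y) (Q_le_G y x0S).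
have rn := pow_lt _ n rho_gt0.
have tail_le : 0 <= rho * (evolve dirac n.+1 y / rho ^ n.+1) <= G y / a.
  have e_ge0 := evolve_ge0 n.+1 y dirac_ge0.
  have -> : rho * (evolve dirac n.+1 y / rho ^ n.+1) = evolve dirac n.+1 y / rho ^ n.
    by rewrite /=; field; lra.
  split; first by apply: Rmult_le_pos => //; left; apply: Rinv_0_lt_compat.
  have := evolve_dirac_le n y; have := rho_rate n => -[_ hi].
  have sG : survival n x0 * G y <= rho ^ n / a * G y by apply: Rmult_le_compat_r.
  move=> le; apply: Rle_trans (_ : rho ^ n / a * G y / rho ^ n <= _); last by right; field; lra.
  by apply: Rmult_le_compat_r; [left; apply: Rinv_0_lt_compat | lra].
have dirac_le : 0 <= rho * dirac y <= rho * G y / G x0.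
  rewrite /dirac; case: eqP => [->|_]; first by split; [lra | right; field; lra].
  rewrite Rmult_0_r; split; first lra.
  by apply: Rmult_le_pos; [apply: Rmult_le_pos | left; apply: Rinv_0_lt_compat]; lra.
rewrite cesaro_step.
have -> : rho * (cesaro n.+1 y - dirac y + evolve dirac n.+1 y / rho ^ n.+1) - rho * cesaro n.+1 y
    = rho * (evolve dirac n.+1 y / rho ^ n.+1) - rho * dirac y by ring.
apply: Rabs_le; split; rewrite Rmult_plus_distr_r /Rdiv Rmult_assoc; lra.
Qed.

Definition qsd_candidate n y : R :=
  if y \in S then cesaro n y / sumR S (cesaro n) else 0.

Lemma qsd_candidate_approx n eta : 0 < eta ->
  (/ a + rho / G x0) * b <= eta * INR n.+1 -> approx_qsd eta rho (qsd_candidate n.+1).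
Proof.
move=> eta_gt0 n_large; set m := sumR S (cesaro n.+1).
have n1_gt0 : 0 < INR n.+1 by apply: lt_0_INR; lia.
have m_ge : INR n.+1 / b <= m by apply: cesaro_mass.
have m_gt0 : 0 < m by apply: Rlt_le_trans m_ge; apply: Rdiv_lt_0_compat.
rewrite /qsd_candidate -/m; split => //.
- move=> y; case: ifP => _; last lra.
  by apply: Rmult_le_pos; [apply: cesaro_ge0 | left; apply: Rinv_0_lt_compat].
- by move=> y /negbTE ->.
- rewrite (eq_big_seq (fun y => cesaro n.+1 y * / m)); last by move=> y ->.
  by rewrite sumRZr -/m; field; lra.
move=> y yS; rewrite yS.
rewrite (eq_big_seq (fun x => cesaro n.+1 x * Q x y * / m)); last first.
  by move=> x ->; rewrite /Rdiv; ring.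
rewrite sumRZr.
have -> : sumR S (fun x => cesaro n.+1 x * Q x y) * / m - rho * (cesaro n.+1 y / m)
    = (sumR S (fun x => cesaro n.+1 x * Q x y) - rho * cesaro n.+1 y) / m by field; lra.
rewrite /Rdiv Rabs_mult (Rabs_pos_eq (/ m)); last by left; apply: Rinv_0_lt_compat.
have G_ge0 : 0 <= G y by exact: Rle_trans (Q_ge0 x0 y) (Q_le_G y x0S).
have C_ge0 : 0 <= / a + rho / G x0.
  have := Rinv_0_lt_compat _ a_gt0; have := Rdiv_lt_0_compat _ _ rho_gt0 G_x0_gt0; lra.
apply: Rle_trans (_ : (/ a + rho / G x0) * G y * / (INR n.+1 / b) <= _).
  apply: Rmult_le_compat; try exact: Rabs_pos; first by left; apply: Rinv_0_lt_compat.
    exact: cesaro_defect.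
  by apply: Rinv_le_contravar => //; apply: Rdiv_lt_0_compat.
have -> : (/ a + rho / G x0) * G y * / (INR n.+1 / b)
    = G y * ((/ a + rho / G x0) * b) / INR n.+1.
  by have G0 := G_x0_gt0; field; repeat split; lra.
apply: Rle_trans (_ : G y * (eta * INR n.+1) / INR n.+1 <= _).
  apply: Rmult_le_compat_r; first by left; apply: Rinv_0_lt_compat.
  exact: Rmult_le_compat_l.
by right; field; lra.
Qed.

End Cesaro.

Lemma finite_approx_qsd eta : 0 < eta -> exists rho nu, approx_qsd eta rho nu.
Proof.
move=> eta_gt0.
have [rho [a [b [rho_gt0 a_gt0 b_gt0 rho_bnd rate]]]] := survival_rate.
have [n n_large] := INR_unbounded ((/ a + rho / G x0) * b / eta).
exists rho, (qsd_candidate rho n.+1).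
apply: (qsd_candidate_approx rho_gt0 a_gt0 b_gt0 rho_bnd rate eta_gt0).
have := Rmult_lt_compat_r eta _ _ eta_gt0 n_large; rewrite S_INR.
have G0 := G_x0_gt0.
have -> : (/ a + rho / G x0) * b / eta * eta = (/ a + rho / G x0) * b by field; lra.
nra.
Qed.

End FiniteKernel.

Lemma exp_le_exp x y : x <= y -> exp x <= exp y.
Proof. by move=> [lt|->]; [left; apply: exp_increasing | lra]. Qed.

Lemma factE j : j`! = Factorial.fact j.
Proof. by elim: j => [//|j IH]; rewrite factS IH /= mulnE. Qed.

Lemma INR_fact_gt0 j : 0 < INR j`!.
Proof. by rewrite factE; apply: INR_fact_lt_0. Qed.

Lemma big_ord_sum_f_R0 (f : nat -> R) J : \big[Rplus/0]_(j < J.+1) f j = sum_f_R0 f J.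
Proof. by elim: J => [|J IH]; rewrite big_ord_recr ?big_ord0 ?IH //= Rplus_0_l. Qed.

Lemma exp_partial_sum_le x J : 0 <= x -> \big[Rplus/0]_(j < J) (x ^ j / INR j`!) <= exp x.
Proof.
move=> x_ge0; case: J => [|J]; first by rewrite big_ord0; left; apply: exp_pos.
pose a i := / INR (Factorial.fact i) * x ^ i.
have a_cv : Un_cv (fun n => sum_f_R0 a n) (exp x).
  by rewrite /exp; case: (exist_exp x) => l l_cv /=.
have a_growing : Un_growing (fun n => sum_f_R0 a n).
  move=> n /=; suff : 0 <= a n.+1 by lra.
  by apply: Rmult_le_pos; [left; apply: Rinv_0_lt_compat; apply: INR_fact_lt_0 | apply: pow_le].
have := growing_ineq _ _ a_growing a_cv J.
rewrite (big_ord_sum_f_R0 (fun j => x ^ j / INR j`!)) (PartSum.sum_eq _ a) // => i _.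
by rewrite /a factE /Rdiv Rmult_comm.
Qed.

Lemma poisson_pmf_ge0 lam j : 0 <= lam -> 0 <= poisson_pmf lam j.
Proof.
move=> lam_ge0; apply: Rmult_le_pos.
  by apply: Rmult_le_pos; [left; apply: exp_pos | apply: pow_le].
by left; apply: Rinv_0_lt_compat; apply: INR_fact_gt0.
Qed.

Lemma poisson_pmf_gt0 lam j : 0 < lam -> 0 < poisson_pmf lam j.
Proof.
move=> lam_gt0; apply: Rmult_lt_0_compat.
  by apply: Rmult_lt_0_compat; [apply: exp_pos | apply: pow_lt].
by apply: Rinv_0_lt_compat; apply: INR_fact_gt0.
Qed.

Lemma poisson_pmf_partial_sum_le1 lam J : 0 <= lam ->
  \big[Rplus/0]_(j < J) poisson_pmf lam j <= 1.
Proof.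
move=> lam_ge0.
rewrite (eq_bigr (fun j : 'I_J => exp (- lam) * (lam ^ j / INR j`!))); last first.
  by move=> j _; rewrite /poisson_pmf /Rdiv; ring.
rewrite -(big_distrr (times := Rmult)) /=.
have := exp_partial_sum_le J lam_ge0; have := exp_pos (- lam) => e_gt0 le.
apply: Rle_trans (_ : exp (- lam) * exp lam <= _); first by apply: Rmult_le_compat_l => //; lra.
by rewrite -exp_plus Rplus_opp_l exp_0; lra.
Qed.

Lemma poisson_pmf_le lam L j : 0 <= lam <= L -> poisson_pmf lam j <= L ^ j / INR j`!.
Proof.
move=> [lam_ge0 lam_le]; rewrite /poisson_pmf /Rdiv.
apply: Rmult_le_compat_r; first by left; apply: Rinv_0_lt_compat; apply: INR_fact_gt0.
have e_le1 : exp (- lam) <= 1 by rewrite -exp_0; apply: exp_le_exp; lra.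
have := pow_incr _ _ j (conj lam_ge0 lam_le); have := pow_le _ j lam_ge0.
have := exp_pos (- lam); nra.
Qed.

Lemma prodR_ge0 k (a : 'I_k -> R) : (forall i, 0 <= a i) -> 0 <= \big[Rmult/1]_(i < k) a i.
Proof.
by move=> a_ge0; apply: (big_ind (fun x => 0 <= x)) => [|*|i _]; [lra | nra | apply: a_ge0].
Qed.

Lemma prodR_gt0 k (a : 'I_k -> R) : (forall i, 0 < a i) -> 0 < \big[Rmult/1]_(i < k) a i.
Proof.
by move=> a_gt0; apply: (big_ind (fun x => 0 < x)) => [|*|i _]; [lra | nra | apply: a_gt0].
Qed.

Lemma prodR_le k (a b : 'I_k -> R) : (forall i, 0 <= a i <= b i) ->
  \big[Rmult/1]_(i < k) a i <= \big[Rmult/1]_(i < k) b i.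
Proof.
move=> ab; suff : 0 <= \big[Rmult/1]_(i < k) a i <= \big[Rmult/1]_(i < k) b i by case.
apply: (big_ind2 (fun x y => 0 <= x <= y)) => [|x1 x2 y1 y2 [? ?] [? ?]|i _]; [lra | | exact: ab].
by split; [apply: Rmult_le_pos | apply: Rmult_le_compat].
Qed.

(* A finite set of lattice points fits in a box, where the sum factorises. *)
Lemma sumR_prod_le k (h : 'I_k -> nat -> R) (H : 'I_k -> R) (l : seq {ffun 'I_k -> nat}) :
  uniq l -> (forall i j, 0 <= h i j) -> (forall i J, \big[Rplus/0]_(j < J) h i j <= H i) ->
  sumR l (fun y => \big[Rmult/1]_(i < k) h i (y i)) <= \big[Rmult/1]_(i < k) H i.
Proof.
move=> ul h_ge0 h_le.
set J := (\sum_(y <- l) \sum_(i < k) y i)%N.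
pose box (f : {ffun 'I_k -> 'I_J.+1}) : {ffun 'I_k -> nat} := [ffun i => nat_of_ord (f i)].
have box_inj : injective box.
  move=> f g /ffunP fg; apply/ffunP => i; apply: val_inj.
  by have := fg i; rewrite !ffunE.
have l_box : {subset l <= map box (index_enum _)}.
  move=> y yl; have y_le i : (y i <= J)%N.
    rewrite /J (big_rem y yl) /= (bigD1 i) //=.
    by rewrite -addnA leq_addr.
  have -> : y = box [ffun i => inord (y i)] by apply/ffunP => i; rewrite !ffunE inordK ?ltnS ?y_le.
  by apply: map_f; rewrite mem_index_enum.
apply: Rle_trans (sumR_subset ul _ l_box _) _.
- by rewrite map_inj_uniq ?index_enum_uniq.
- by move=> y _; apply: prodR_ge0.
rewrite big_map.
rewrite (eq_bigr (fun f : {ffun 'I_k -> 'I_J.+1} => \big[Rmult/1]_(i < k) h i (f i))); last first.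
  by move=> f _; apply: eq_bigr => i _; rewrite ffunE.
rewrite -(bigA_distr_bigA (fun i (j : 'I_J.+1) => h i j)).
apply: prodR_le => i; split; last exact: h_le.
apply: (big_ind (fun x => 0 <= x)) => [|x y|j _]; first lra; last exact: h_ge0.
exact: Rplus_le_le_0_compat.
Qed.

Lemma cluster_value_between (u : nat -> R) v lo hi : (forall N, lo <= u N <= hi) ->
  (forall d, 0 < d -> exists N, Rabs (u N - v) < d) -> lo <= v <= hi.
Proof.
move=> u_bnd close; split; apply: Rle_plus_epsilon => d d_gt0;
  have [N uN] := close d d_gt0; have := u_bnd N; have := Rle_abs (u N - v);
  have := Rle_abs (v - u N); rewrite Rabs_minus_sym; lra.
Qed.

Section NonlinearPoisson.
Variables (k : nat) (F : vecR k -> vecR k) (B eps : R) (M0 : vecR k -> Prop).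
Hypotheses (k_gt0 : (1 <= k)%nat)
  (F_ge0 : forall x, nonnegv x -> forall i, 0 <= F x i)
  (F_bnd : forall x, nonnegv x -> forall i, Rabs (F x i) <= B)
  (M0_def : (forall x, M0 x <-> origin_set x) \/ (forall x, M0 x <-> boundary_set x))
  (F_gt0 : forall x, nonnegv x -> ~ M0 x -> forall i, 0 < F x i)
  (eps_gt0 : 0 < eps).

Local Notation pt n := (Defs.pos eps n).
Local Notation Q := (kernel F eps).

Definition mean_bound := (Rabs B + 1) / eps.

Definition dominating (m : lat k) : R :=
  \big[Rmult/1]_(i < k) (mean_bound ^ m i / INR (m i)`!).

Lemma pt_nonneg (n : lat k) : nonnegv (pt n).
Proof. by move=> i; apply: Rmult_le_pos; [lra | apply: pos_INR]. Qed.

Lemma mean_bound_gt0 : 0 < mean_bound.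
Proof. by apply: Rdiv_lt_0_compat => //; have := Rabs_pos B; lra. Qed.

Lemma mean_bounds (n : lat k) i : 0 <= F (pt n) i / eps <= mean_bound.
Proof.
have F0 := F_ge0 (pt_nonneg n) i; have FB := F_bnd (pt_nonneg n) i.
have ie : 0 <= / eps by left; apply: Rinv_0_lt_compat.
split; first exact: Rmult_le_pos.
apply: Rmult_le_compat_r => //.
by have := Rle_abs (F (pt n) i); have := Rle_abs B; lra.
Qed.

Lemma kernel_ge0 (n m : lat k) : 0 <= Q n m.
Proof. by apply: prodR_ge0 => i; apply: poisson_pmf_ge0; case: (mean_bounds n i). Qed.

Lemma kernel_le_dominating (n m : lat k) : Q n m <= dominating m.
Proof.
apply: prodR_le => i; have := mean_bounds n i => -[lo hi].
by split; [apply: poisson_pmf_ge0 | apply: poisson_pmf_le].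
Qed.

Lemma sumR_kernel_le1 (n : lat k) l : uniq l -> sumR l (Q n) <= 1.
Proof.
move=> ul; have := sumR_prod_le (H := fun _ => 1) ul
  (fun i j => poisson_pmf_ge0 j (proj1 (mean_bounds n i)))
  (fun i J => poisson_pmf_partial_sum_le1 J (proj1 (mean_bounds n i))).
by rewrite big1_eq.
Qed.

Lemma kernel_le1 (n m : lat k) : Q n m <= 1.
Proof. by have := sumR_kernel_le1 n (l := [:: m]) isT; rewrite big_cons big_nil Rplus_0_r. Qed.

Lemma dominating_ge0 (m : lat k) : 0 <= dominating m.
Proof.
apply: prodR_ge0 => i; apply: Rmult_le_pos; first by apply: pow_le; left; exact: mean_bound_gt0.
by left; apply: Rinv_0_lt_compat; apply: INR_fact_gt0.
Qed.

Lemma sumR_dominating_le (l : seq (lat k)) :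
  uniq l -> sumR l dominating <= \big[Rmult/1]_(i < k) exp mean_bound.
Proof.
move=> ul; apply: (sumR_prod_le (h := fun _ j => mean_bound ^ j / INR j`!)) => // [i j|i J].
  apply: Rmult_le_pos; first by apply: pow_le; left; exact: mean_bound_gt0.
  by left; apply: Rinv_0_lt_compat; apply: INR_fact_gt0.
by apply: exp_partial_sum_le; left; exact: mean_bound_gt0.
Qed.

Definition alive (n : lat k) : bool :=
  if excluded_middle_informative (M0 (pt n)) then false else true.

Lemma aliveP (n : lat k) : alive n <-> ~ M0 (pt n).
Proof. by rewrite /alive; case: excluded_middle_informative. Qed.

Definition ones : lat k := [ffun _ => 1%nat].
Definition origin : lat k := [ffun _ => 0%nat].

Lemma alive_ones : alive ones.
Proof.
apply/aliveP => M0_ones; case: M0_def => [/(_ (pt ones))|/(_ (pt ones))] [/(_ M0_ones) M0c _].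
  by have := M0c (Ordinal k_gt0); rewrite /Defs.pos ffunE /=; lra.
case: M0c => _; apply: Rgt_not_eq; apply: prodR_gt0 => i; rewrite /Defs.pos ffunE /=; lra.
Qed.

Lemma dead_origin : alive origin = false.
Proof.
apply/negbTE/negP => /aliveP; apply; case: M0_def => ->.
  by move=> i; rewrite /Defs.pos ffunE /=; ring.
split; first exact: pt_nonneg.
by rewrite (bigD1 (Ordinal k_gt0)) //= /Defs.pos ffunE /= Rmult_0_r Rmult_0_l.
Qed.

Lemma kernel_gt0 (n m : lat k) : alive n -> 0 < Q n m.
Proof.
move=> /aliveP n_alive; apply: prodR_gt0 => i; apply: poisson_pmf_gt0.
exact: Rdiv_lt_0_compat (F_gt0 (pt_nonneg n) n_alive i) eps_gt0.
Qed.

(* Every point jumps to the origin, which lies in [M0], with probability at least [theta];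
   this keeps the eigenvalue below one. *)
Definition theta : R := \big[Rmult/1]_(i < k) exp (- mean_bound).

Lemma theta_gt0 : 0 < theta.
Proof. by apply: prodR_gt0 => i; apply: exp_pos. Qed.

Lemma kernel_origin_ge (n : lat k) : theta <= Q n origin.
Proof.
apply: prodR_le => i; split; first by left; apply: exp_pos.
rewrite ffunE /poisson_pmf /= Rmult_1_r /Rdiv Rinv_1 Rmult_1_r.
by apply: exp_le_exp; have := mean_bounds n i; lra.
Qed.

Definition trunc N : seq (lat k) :=
  undup (ones :: [seq y <- pmap unpickle (iota 0 N) | alive y]).

Lemma trunc_uniq N : uniq (trunc N).
Proof. exact: undup_uniq. Qed.

Lemma ones_in_trunc N : ones \in trunc N.
Proof. by rewrite mem_undup mem_head. Qed.

Lemma trunc_alive N y : y \in trunc N -> alive y.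
Proof.
rewrite mem_undup inE => /orP [/eqP ->|]; first exact: alive_ones.
by rewrite mem_filter => /andP [].
Qed.

Lemma mem_trunc N y : alive y -> (pickle y < N)%N -> y \in trunc N.
Proof.
move=> y_alive yN; rewrite mem_undup inE mem_filter y_alive /=; apply/orP; right.
by rewrite mem_pmap; apply/mapP; exists (pickle y); rewrite ?pickleK // mem_iota.
Qed.

Lemma sumR_trunc_kernel_le N x : sumR (trunc N) (Q x) <= 1 - theta.
Proof.
have origin_trunc : origin \notin trunc N by apply/negP => /trunc_alive; rewrite dead_origin.
have := sumR_kernel_le1 x (l := origin :: trunc N); rewrite /= origin_trunc trunc_uniq big_cons.
move=> /(_ isT) le; apply: (Rplus_le_reg_l (Q x origin)); apply: Rle_trans le _.
by have := kernel_origin_ge x; lra.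
Qed.

Lemma approx_qsd_trunc N : exists p : R * (lat k -> R),
  approx_qsd (trunc N) ones Q dominating (1 - theta) (/ INR N.+1) p.1 p.2.
Proof.
have [rho [nu qsd]] := finite_approx_qsd (trunc_uniq N) (ones_in_trunc N) kernel_ge0
  (fun x y xS _ => kernel_gt0 y (trunc_alive xS)) (fun x y _ => kernel_le_dominating x y)
  (fun x _ => sumR_trunc_kernel_le N x) (Rinv_0_lt_compat _ (lt_0_INR _ (Nat.lt_0_succ N))).
by exists (rho, nu).
Qed.

Definition rhoN N := (proj1_sig (constructive_indefinite_description _ (approx_qsd_trunc N))).1.
Definition nuN N := (proj1_sig (constructive_indefinite_description _ (approx_qsd_trunc N))).2.

Lemma approx_qsdN N :
  approx_qsd (trunc N) ones Q dominating (1 - theta) (/ INR N.+1) (rhoN N) (nuN N).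
Proof. exact: proj2_sig (constructive_indefinite_description _ (approx_qsd_trunc N)). Qed.

Local Notation c0 := (Q ones ones).

Lemma c0_gt0 : 0 < c0.
Proof. exact: kernel_gt0 alive_ones. Qed.

(* Since [c0 <= rho], the eigen-inequality gives [c0 nu <= nu Q + error <= 2 dominating]. *)
Definition dom_qsd y : R := 2 * dominating y / c0.

Lemma nuN_le N y : nuN N y <= dom_qsd y.
Proof.
have [[c0_le _] nu_ge0 nu_supp nu_mass nu_eigen] := approx_qsdN N.
have D_ge0 := dominating_ge0 y; have c0_pos := c0_gt0; have nu_y := nu_ge0 y.
suff : c0 * nuN N y <= 2 * dominating y.
  by move=> le; apply: (Rmult_le_reg_l c0) => //; rewrite /dom_qsd; field_simplify; lra.
have [yS|/nu_supp ->] := boolP (y \in trunc N); last by lra.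
have nuQ_le : sumR (trunc N) (fun x => nuN N x * Q x y) <= dominating y.
  apply: Rle_trans (_ : sumR (trunc N) (fun x => nuN N x * dominating y) <= _).
    by apply: sumR_le => x _; apply: Rmult_le_compat_l => //; apply: kernel_le_dominating.
  by rewrite sumRZr nu_mass; lra.
have eta_le1 : / INR N.+1 <= 1.
  by rewrite -Rinv_1; apply: Rinv_le_contravar; [lra | rewrite S_INR; have := pos_INR N; lra].
have c0_rho : c0 * nuN N y <= rhoN N * nuN N y by apply: Rmult_le_compat_r.
have eta_G : / INR N.+1 * dominating y <= dominating y by nra.
have err : Rabs (sumR (trunc N) (fun x => nuN N x * Q x y) - rhoN N * nuN N y)
    <= / INR N.+1 * dominating y := nu_eigen y yS.
have := Rle_abs (- (sumR (trunc N) (fun x => nuN N x * Q x y) - rhoN N * nuN N y)).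
rewrite Rabs_Ropp; lra.
Qed.

Lemma dom_qsd_ge0 y : 0 <= dom_qsd y.
Proof.
apply: Rmult_le_pos; first by have := dominating_ge0 y; lra.
by left; apply: Rinv_0_lt_compat; exact: c0_gt0.
Qed.

Lemma dom_qsd_summable : exists TD, has_sum (fun _ => True) dom_qsd TD.
Proof.
suff [TD DTD _] : exists2 TD, has_sum (fun _ => True) dom_qsd TD &
    TD <= 2 / c0 * \big[Rmult/1]_(i < k) exp mean_bound by exists TD.
apply: has_sum_bounded => l [ul _].
rewrite (eq_bigr (fun y => 2 / c0 * dominating y)); last first.
  by move=> y _; rewrite /dom_qsd /Rdiv; ring.
rewrite sumRZ; apply: Rmult_le_compat_l; last exact: sumR_dominating_le.
by apply: Rmult_le_pos; [lra | left; apply: Rinv_0_lt_compat; exact: c0_gt0].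
Qed.

(* The eigenvalue and the weights of all lattice points, enumerated through [pickle],
   form one bounded double sequence, to which the diagonal argument applies. *)
Definition coords N m : R := if m is j.+1 then oapp (nuN N) 0 (unpickle j) else rhoN N.
Definition coord_bounds m : R := if m is j.+1 then oapp dom_qsd 0 (unpickle j) else 1.

Lemma coords_bnd N m : 0 <= coords N m <= coord_bounds m.
Proof.
have [[c0_le rho_le] nu_ge0 _ _ _] := approx_qsdN N.
case: m => [|j] /=; first by have := c0_gt0; have := theta_gt0; lra.
by case: (unpickle j) => [y|] /=; [split; [exact: nu_ge0 | exact: nuN_le] | lra].
Qed.

Definition lam : R := diagonal_limit coords_bnd 0.
Definition mu (y : lat k) : R := diagonal_limit coords_bnd (pickle y).+1.

Lemma limit_close (l : seq (lat k)) d n0 : 0 < d -> exists N, (n0 <= N)%N /\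
  Rabs (rhoN N - lam) < d /\ forall y, y \in l -> Rabs (nuN N y - mu y) < d.
Proof.
move=> d_gt0.
have [N [n0N close]] := diagonal_limit_cluster coords_bnd (\sum_(y <- l) pickle y).+2 d_gt0 n0.
exists N; split => //; split; first exact: (close 0%N).
move=> y yl; have := close (pickle y).+1; rewrite /coords pickleK; apply.
by rewrite !ltnS (big_rem y yl) /= leq_addr.
Qed.

Lemma eventually_in_trunc (y : lat k) d : 0 < d ->
  exists n0, forall N, (n0 <= N)%N -> / INR N.+1 <= d /\ (alive y -> y \in trunc N).
Proof.
move=> d_gt0; have [n n_big] := INR_unbounded (/ d).
exists (maxn n (pickle y).+1) => N; rewrite geq_max => /andP [nN yN].
split; last by move=> y_alive; apply: mem_trunc.
rewrite -(Rinv_inv d); apply: Rinv_le_contravar; first exact: Rinv_0_lt_compat.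
by have := le_INR _ _ (elimT leP nN); rewrite S_INR; lra.
Qed.

Lemma mu_bounds y : 0 <= mu y <= dom_qsd y.
Proof.
apply: (cluster_value_between (u := fun N => nuN N y)) => [N|d d_gt0].
  by have [_ nu_ge0 _ _ _] := approx_qsdN N; split; [exact: nu_ge0 | exact: nuN_le].
by have [N [_ [_ close]]] := limit_close [:: y] 0 d_gt0; exists N; apply: close; rewrite mem_head.
Qed.

Lemma mu_dead y : alive y = false -> mu y = 0.
Proof.
move=> y_dead; suff : 0 <= mu y <= 0 by lra.
apply: (cluster_value_between (u := fun N => nuN N y)) => [N|d d_gt0].
  have [_ _ nu_supp _ _] := approx_qsdN N.
  by rewrite nu_supp; [lra | apply/negP => /trunc_alive; rewrite y_dead].
by have [N [_ [_ close]]] := limit_close [:: y] 0 d_gt0; exists N; apply: close; rewrite mem_head.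
Qed.

Lemma lam_bounds : c0 <= lam <= 1 - theta.
Proof.
apply: (cluster_value_between (u := rhoN)) => [N|d d_gt0]; first by have [] := approx_qsdN N.
by have [N [_ [close _]]] := limit_close [::] 0 d_gt0; exists N.
Qed.

Lemma mu_mass : has_sum (fun _ => True) mu 1.
Proof.
have [TD DTD] := dom_qsd_summable.
apply: (has_sum_dominated_cluster (g := nuN) (a := fun _ => 1) DTD) => [N x|N|l d d_gt0].
- by have [_ nu_ge0 _ _ _] := approx_qsdN N; split; [exact: nu_ge0 | exact: nuN_le].
- have [_ nu_ge0 nu_supp nu_mass _] := approx_qsdN N.
  by rewrite -nu_mass; apply: has_sum_supp (trunc_uniq N) nu_ge0 nu_supp.
have [N [_ [_ close]]] := limit_close l 0 d_gt0.
exists N; split; first by rewrite Rminus_diag Rabs_R0; lra.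
by move=> x /close; lra.
Qed.

Lemma eigen_term_close N y e : Rabs (rhoN N - lam) < e -> Rabs (nuN N y - mu y) < e ->
  Rabs (rhoN N * nuN N y - lam * mu y) <= e * (1 + dom_qsd y).
Proof.
move=> rho_close nu_close; have [[c0_le rho_le] _ _ _ _] := approx_qsdN N.
have [mu_ge0 mu_le] := mu_bounds y; have := c0_gt0; have := theta_gt0 => ? ?.
have -> : rhoN N * nuN N y - lam * mu y = rhoN N * (nuN N y - mu y) + (rhoN N - lam) * mu y.
  by ring.
apply: Rle_trans (Rabs_triang _ _) _.
rewrite !Rabs_mult (Rabs_pos_eq (rhoN N)) ?(Rabs_pos_eq (mu y)); try lra.
have := Rabs_pos (nuN N y - mu y); have := Rabs_pos (rhoN N - lam); nra.
Qed.

Lemma mu_eigen y : alive y -> has_sum (fun _ => True) (fun x => mu x * Q x y) (lam * mu y).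
Proof.
move=> y_alive; have [TD DTD] := dom_qsd_summable.
apply: (has_sum_dominated_cluster (g := fun N x => nuN N x * Q x y)
  (a := fun N => sumR (trunc N) (fun x => nuN N x * Q x y)) DTD) => [N x|N|l d d_gt0].
- have [_ nu_ge0 _ _ _] := approx_qsdN N; have := kernel_le1 x y; have := kernel_ge0 x y.
  by have := nuN_le N x; have := nu_ge0 x; split; nra.
- have [_ nu_ge0 nu_supp _ _] := approx_qsdN N.
  apply: has_sum_supp (trunc_uniq N) _ _ => x; first by apply: Rmult_le_pos; [|apply: kernel_ge0].
  by move=> /nu_supp ->; rewrite Rmult_0_l.
have G_ge0 := dominating_ge0 y; have D_ge0 := dom_qsd_ge0 y.
pose e := d / (dominating y + dom_qsd y + 2).
have e_gt0 : 0 < e by apply: Rdiv_lt_0_compat; lra.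
have e_d : e * (dominating y + dom_qsd y + 2) = d by rewrite /e; field; lra.
have [n0 large] := eventually_in_trunc y e_gt0.
have [N [n0N [rho_close nu_close]]] := limit_close (y :: l) n0 e_gt0.
have [eta_le /(_ y_alive) yN] := large N n0N.
have [_ _ _ _ nu_eigen] := approx_qsdN N.
have err : Rabs (sumR (trunc N) (fun x => nuN N x * Q x y) - rhoN N * nuN N y)
    <= / INR N.+1 * dominating y := nu_eigen y yN.
have eta_G : / INR N.+1 * dominating y <= e * dominating y by apply: Rmult_le_compat_r.
have term := eigen_term_close rho_close (nu_close y (mem_head _ _)).
exists N; split.
  have -> : sumR (trunc N) (fun x => nuN N x * Q x y) - lam * mu y =
    (sumR (trunc N) (fun x => nuN N x * Q x y) - rhoN N * nuN N y) +
    (rhoN N * nuN N y - lam * mu y) by ring.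
  by apply: Rle_trans (Rabs_triang _ _) _; nra.
move=> x xl; have := nu_close x; rewrite inE xl orbT => /(_ isT) close.
have -> : nuN N x * Q x y - mu x * Q x y = (nuN N x - mu x) * Q x y by ring.
rewrite Rabs_mult (Rabs_pos_eq (Q x y)); last exact: kernel_ge0.
have := kernel_le1 x y; have := kernel_ge0 x y; have := Rabs_pos (nuN N x - mu x); nra.
Qed.

Lemma qsd_mu_lam : is_QSD F eps M0 mu lam.
Proof.
have [c0_le lam_le] := lam_bounds; have := c0_gt0; have := theta_gt0 => ? ?.
split; first by move=> y; case: (mu_bounds y).
split; first by move=> n n_M0; apply: mu_dead; apply/negbTE/negP => /aliveP.
split; first exact: mu_mass.
split; first lra.
move=> Gam Gam_alive.
have q_ex n : exists q, has_sum Gam (Q n) q.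
  have [q qn _] := has_sum_bounded (P := Gam) (f := Q n) (M := 1)
    (fun l lA => sumR_kernel_le1 n (proj1 lA)).
  by exists q.
pose q n := proj1_sig (constructive_indefinite_description _ (q_ex n)).
have qP n : has_sum Gam (Q n) (q n) := proj2_sig (constructive_indefinite_description _ (q_ex n)).
have [b bP _] := has_sum_bounded (P := Gam) (f := mu) (M := 1)
  (fun l lA => has_sum_ub mu_mass (conj (proj1 lA) (fun _ _ => I))).
exists q, (lam * b), b; split; first exact: qP.
split; last by split.
apply: (has_sum_swap (P1 := fun _ => True) (P2 := Gam) (f := fun x y => mu x * Q x y)
  (r := fun x => mu x * q x) (c := fun y => lam * mu y)).
- by move=> x y; apply: Rmult_le_pos; [case: (mu_bounds x) | apply: kernel_ge0].
- by move=> x _; apply: has_sumZ (qP x); case: (mu_bounds x).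
- by move=> y /Gam_alive /aliveP; apply: mu_eigen.
- by apply: has_sumZ => //; lra.
Qed.

End NonlinearPoisson.

Theorem mainTheorem17 (k : nat) (hk : (1 <= k)%nat) (F : vecR k -> vecR k)
  (HFpos : forall x, nonnegv x -> forall i, 0 <= F x i)
  (HFbdd : exists B : R, forall x, nonnegv x -> forall i, Rabs (F x i) <= B)
  (M0 : vecR k -> Prop)
  (HM0 : (forall x, M0 x <-> origin_set x) \/ (forall x, M0 x <-> boundary_set x))
  (HFpos_out : forall x, nonnegv x -> ~ M0 x -> forall i, 0 < F x i) :
  forall eps : R, 0 < eps -> absorbing F eps M0 ->
    exists (mu : lat k -> R) (lam : R), is_QSD F eps M0 mu lam.
Proof.
move=> eps eps_gt0 _; have [B F_bnd] := HFbdd.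
by do 2!eexists; apply: (qsd_mu_lam hk HFpos F_bnd HM0 HFpos_out eps_gt0).
Qed.
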